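(* Let $(\rho,\sigma)\in\mathfrak V$ with $\sigma\le0$ and $\rho\mid l$, and let $\lambda\in K$. Let $\varphi$ be the automorphism of $W^{(l)}$ with $\varphi(X^{1/l})=X^{1/l}$ and $\varphi(Y)=Y+\lambda X^{\sigma/\rho}$, and let $\varphi_L$ be the automorphism of $L^{(l)}$ with $\varphi_L(x^{1/l})=x^{1/l}$, $\varphi_L(y)=y+\lambda x^{\sigma/\rho}$. Then for all $P\in W^{(l)}\setminus\{0\}$: $\ell_{\rho,\sigma}(\varphi(P))=\varphi_L(\ell_{\rho,\sigma}(P))$ and $v_{\rho,\sigma}(\varphi(P))=v_{\rho,\sigma}(P)$. Furthermore, $\ell_{\rho_1,\sigma_1}(\varphi(P))=\ell_{\rho_1,\sigma_1}(P)$ for all $(\rho_1,\sigma_1)\in\mathfrak V$ with $(\rho,\sigma)<(\rho_1,\sigma_1)<(-1,1)$.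
   Context: $K$ is a field of characteristic zero, $l\in\mathbb{N}$. $W^{(l)}$ is the associative $K$-algebra with $K$-basis $\{X^{i/l}Y^j:i\in\mathbb{Z},j\in\mathbb{N}_0\}$, powers of $X$ multiplying as Laurent monomials and $[Y,X^\alpha]=\alpha X^{\alpha-1}$ for $\alpha\in\frac1l\mathbb{Z}$. $L^{(l)}=K[x^{\pm1/l},y]$, $\Psi^{(l)}(X^{i/l}Y^j)=x^{i/l}y^j$ ($K$-linear); supports are sets of exponents with nonzero coefficient. $\mathfrak V=\{(\rho,\sigma)\in\mathbb{Z}^2:\gcd(\rho,\sigma)=1,\rho+\sigma>0\}$. For $P\ne0$, $v_{\rho,\sigma}(P)=\max\{\rho a+\sigma b:(a,b)\in\mathrm{Supp}(P)\}$, $\ell_{\rho,\sigma}(P)\in L^{(l)}$ = sum of terms of $\Psi^{(l)}(P)$ attaining it. Order: $(\rho,\sigma)<(-1,1)$ for all $(\rho,\sigma)\in\mathfrak V$, and on $\mathfrak V$, $(\rho_1,\sigma_1)\le(\rho,\sigma)$ iff $\rho_1\sigma-\sigma_1\rho\ge0$. *)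

From HB Require Import structures.
From mathcomp Require Import all_boot all_order all_algebra.
From mathcomp Require Import finmap.
From mathcomp Require Import monalg.
Set Implicit Arguments. Unset Strict Implicit. Unset Printing Implicit Defensive.
Import Order.TTheory GRing.Theory Num.Theory.
Local Open Scope ring_scope.

(* An element of W^(l) (resp. L^(l)) is a finitely supported map
   (i, j) : int * nat |-> coefficient of X^(i/l) Y^j (resp. x^(i/l) y^j).
   Both algebras share the underlying K-vector space; Psi^(l) is the identity
   on coefficients. *)
Notation Wpoly K := {malg K[(int * nat)%type]}.

Section Defs.
Variable K : fieldType.

Definition mon (i : int) (j : nat) : Wpoly K := << ((i, j) : int * nat) >>.

Definition ffact (alpha : K) (k : nat) : K := \prod_(m < k) (alpha - m%:R).

(* Product of basis monomials in W^(l), from [Y, X^alpha] = alpha X^(alpha-1):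
   X^(a/l) Y^b * X^(c/l) Y^d
     = sum_k C(b,k) (c/l)_k X^((a+c)/l - k) Y^(b+d-k). *)
Definition Wmonmul (l : nat) (u v : int * nat) : Wpoly K :=
  \sum_(k < u.2.+1)
     ('C(u.2, k)%:R * ffact (v.1%:~R / l%:R) k) *:
       mon (u.1 + v.1 - (k * l)%:Z) ((u.2 + v.2) - k)%N.

Definition Wmul (l : nat) (P Q : Wpoly K) : Wpoly K :=
  \sum_(u <- msupp P) \sum_(v <- msupp Q) (P@_u * Q@_v) *: Wmonmul l u v.

Definition Lmul (P Q : Wpoly K) : Wpoly K :=
  \sum_(u <- msupp P) \sum_(v <- msupp Q)
     (P@_u * Q@_v) *: mon (u.1 + v.1) (u.2 + v.2)%N.

Definition weight (l : nat) (rho sigma : int) (u : int * nat) : rat :=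
  rho%:~R * (u.1%:~R / l%:R) + sigma%:~R * u.2%:R.

Definition vdeg (l : nat) (rho sigma : int) (P : Wpoly K) : rat :=
  let s := enum_fset (msupp P) in
  foldr Num.max (weight l rho sigma (head (0%:Z, 0%N) s))
        [seq weight l rho sigma u | u <- s].

(* ell_{rho,sigma}(P) in L^(l): the terms of Psi(P) attaining v_{rho,sigma}(P). *)
Definition lead (l : nat) (rho sigma : int) (P : Wpoly K) : Wpoly K :=
  \sum_(u <- msupp P | weight l rho sigma u == vdeg l rho sigma P) << P@_u *g u >>.

End Defs.

Definition inV (rho sigma : int) : bool :=
  (gcdz rho sigma == 1) && (0 < rho + sigma).

Definition leV (r1 s1 r s : int) : bool := 0 <= r1 * s - s1 * r.
Definition ltV (r1 s1 r s : int) : bool :=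
  leV r1 s1 r s && ((r1, s1) != (r, s)).

(* Give X^(i/l) Y^j the weight w(i, j) = rho i/l + sigma j.  In W^(l) the product
   of two monomials is their product in L^(l) plus commutator terms, each of which
   lowers the weight by a positive multiple of rho + sigma.  Since phi fixes X and
   sends Y to Y + lambda X^(sigma/rho), which is homogeneous of weight sigma,
   induction on j shows that phi(X^(i/l) Y^j) is phi_L(x^(i/l) y^j), homogeneous of
   weight w(i, j), plus terms of lower weight; by linearity the leading form of
   phi(P) is phi_L of the leading form of P.  For (rho, sigma) < (rho1, sigma1) the
   term lambda X^(sigma/rho) has (rho1, sigma1)-weight rho1 sigma/rho < sigma1, so
   for that weight phi is the identity up to lower terms. *)

From Pilot Require Import Defs.
From HB Require Import structures.
From mathcomp Require Import all_boot all_order all_algebra.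
From mathcomp Require Import finmap.
From mathcomp Require Import monalg.
From mathcomp Require Import ring.
Set Implicit Arguments. Unset Strict Implicit. Unset Printing Implicit Defensive.
Import Order.TTheory GRing.Theory Num.Theory.
Local Open Scope ring_scope.
Local Notation I := (int * nat)%type.

Section Support.
Variable K : fieldType.
Local Notation A := (Wpoly K).

Definition supported (Q : pred I) (P : A) := forall u, u \in msupp P -> Q u.

Lemma msupp_mon i j : msupp (mon K i j) = [fset ((i, j) : I)]%fset.
Proof. by rewrite /mon msuppU oner_eq0. Qed.

Lemma mcoeff_mon i j u : (mon K i j)@_u = (((i, j) : I) == u)%:R.
Proof. exact: mcoeffU. Qed.

Lemma supported0 Q : supported Q 0.
Proof. by move=> u; rewrite msupp0 inE. Qed.

Lemma supportedD Q P1 P2 : supported Q P1 -> supported Q P2 -> supported Q (P1 + P2).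
Proof.
by move=> h1 h2 u /(fsubsetP (msuppD_le _ _)); rewrite inE => /orP[/h1|/h2].
Qed.

Lemma supportedZ Q c P : supported Q P -> supported Q (c *: P).
Proof. by move=> h u /(fsubsetP (msuppZ_le _ _)) /h. Qed.

Lemma supported_sum (J : Type) (r : seq J) (Pj : pred J) (F : J -> A) Q :
  (forall j, Pj j -> supported Q (F j)) -> supported Q (\sum_(j <- r | Pj j) F j).
Proof.
move=> h; elim/big_rec: _ => [|j R Pjj hR]; first exact: supported0.
by apply: supportedD => //; apply: h.
Qed.

Lemma supported_mon (Q : pred I) i j : Q (i, j) -> supported Q (mon K i j).
Proof. by move=> hQ u; rewrite msupp_mon inE => /eqP ->. Qed.

Lemma sub_supported (Q Q' : pred I) P : subpred Q Q' -> supported Q P -> supported Q' P.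
Proof. by move=> h hP u /hP /h. Qed.

Definition msum (g : I -> A) (P : A) : A := \sum_(u <- msupp P) P@_u *: g u.

Lemma msumEw g P (d : {fset I}) : (msupp P `<=` d)%fset ->
  msum g P = \sum_(u <- d) P@_u *: g u.
Proof.
move=> le; rewrite /msum (big_fset_incl _ le) // => u _ /mcoeff_outdom ->.
by rewrite scale0r.
Qed.

Lemma msum_linear g : linear (msum g).
Proof.
move=> c P Q; pose d := (msupp P `|` msupp Q `|` msupp (c *: P + Q))%fset.
rewrite (@msumEw g (c *: P + Q) d) ?fsubsetUr //.
rewrite (@msumEw g P d); last by apply/fsubsetP => u hu; rewrite /d !inE hu.
rewrite (@msumEw g Q d); last by apply/fsubsetP => u hu; rewrite /d !inE hu !orbT.
rewrite scaler_sumr -big_split; apply: eq_bigr => u _.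
by rewrite mcoeffD mcoeffZ scalerDl scalerA.
Qed.

Lemma msumB g : {morph msum g : P Q / P - Q}.
Proof. exact: zmod_morphism_linear (msum_linear g). Qed.

Lemma msum_sub g h P : msum g P - msum h P = msum (fun u => g u - h u) P.
Proof. by rewrite /msum -sumrB; apply: eq_bigr => u _; rewrite scalerBr. Qed.

Lemma supported_msum Q g P :
  (forall u, u \in msupp P -> supported Q (g u)) -> supported Q (msum g P).
Proof.
by move=> h; rewrite /msum big_seq; apply: supported_sum => u hu; apply/supportedZ/h.
Qed.

Lemma monU (c : K) (u : I) : << c *g u >> = c *: mon K u.1 u.2.
Proof.
apply/malgP => x; rewrite mcoeffZ mcoeff_mon mcoeffU; case: u => a b /=.
by rewrite mulr_natr.
Qed.

Lemma msum_mon P : msum (fun u => mon K u.1 u.2) P = P.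
Proof. by rewrite [RHS]monalgE /msum; apply: eq_bigr => u _; rewrite monU. Qed.

Lemma linear_fun0 (f : A -> A) : linear f -> f 0 = 0.
Proof. by move=> /zmod_morphism_linear fB; have := fB 0 0; rewrite !subrr. Qed.

Lemma linear_msum f P : linear f -> f P = msum (fun u => f (mon K u.1 u.2)) P.
Proof.
move=> flin; have fD : {morph f : Q R / Q + R}.
  by move=> Q R; have := flin 1 Q R; rewrite !scale1r.
have f0 := linear_fun0 flin.
rewrite -{1}(msum_mon P) /msum (big_morph f fD f0).
by apply: eq_bigr => u _; rewrite -[_ *: _]addr0 flin f0 addr0.
Qed.

Lemma supported_linear f Q P : linear f ->
  (forall u, u \in msupp P -> supported Q (f (mon K u.1 u.2))) -> supported Q (f P).
Proof. by move=> flin h; rewrite (linear_msum _ flin); apply: supported_msum. Qed.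

Lemma linearB_fun (f g : A -> A) : linear f -> linear g -> linear (fun P => f P - g P).
Proof. by move=> flin glin c P Q; rewrite flin glin scalerBr opprD addrACA. Qed.

Lemma msupp_neq0 (P : A) : P != 0 -> exists u, u \in msupp P.
Proof.
move=> nP; case: (fset_0Vmem (msupp P)) => [P0|[u hu]]; last by exists u.
by case/eqP: nP; apply/malgP => u; rewrite mcoeff0 mcoeff_outdom // P0.
Qed.

End Support.

Section Products.
Variables (K : fieldType) (l : nat).
Local Notation A := (Wpoly K).

Lemma Wmul_mon a b c d : Wmul l (mon K a b) (mon K c d) = Wmonmul K l (a, b) (c, d).
Proof. by rewrite /Wmul !msupp_mon !big_seq_fset1 !mcoeff_mon !eqxx mulr1 scale1r. Qed.

Lemma Lmul_mon a b c d : Lmul (mon K a b) (mon K c d) = mon K (a + c) (b + d)%N.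
Proof. by rewrite /Lmul !msupp_mon !big_seq_fset1 !mcoeff_mon !eqxx mulr1 scale1r. Qed.

Lemma WmonmulE (u v : I) :
  Wmonmul K l u v = mon K (u.1 + v.1) (u.2 + v.2)%N +
    \sum_(k < u.2) ('C(u.2, k.+1)%:R * ffact (v.1%:~R / l%:R) k.+1) *:
       mon K (u.1 + v.1 - (k.+1 * l)%:Z) ((u.2 + v.2) - k.+1)%N.
Proof.
rewrite /Wmonmul big_ord_recl /= bin0 /ffact big_ord0 mulr1 scale1r.
by rewrite mul0n subr0 subn0.
Qed.

Lemma Wmonmul_Y a b : Wmonmul K l (a, b) (0, 1%N) = mon K a b.+1.
Proof.
rewrite WmonmulE big1 ?addr0 ?addn1 // => k _.
by rewrite /ffact big_ord_recl /= subr0 mul0r mul0r mulr0 scale0r.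
Qed.

Lemma Wmul_X (Q : A) : Wmul l (mon K 1 0) Q = Lmul (mon K 1 0) Q.
Proof.
rewrite /Wmul /Lmul !msupp_mon !big_seq_fset1; apply: eq_bigr => v _.
by rewrite WmonmulE big_ord0 addr0.
Qed.

Lemma mcoeff_Lmul_X (Q : A) (u : I) : (Lmul (mon K 1 0) Q)@_(u.1 + 1, u.2) = Q@_u.
Proof.
rewrite [in RHS](monalgE Q) /Lmul msupp_mon big_seq_fset1 !raddf_sum /=.
apply: eq_bigr => -[v1 v2] _; rewrite mcoeffZ mcoeff_mon mcoeffU mul1r.
case: u => u1 u2 /=; rewrite xpair_eqE add0n [1 + _]addrC (inj_eq (addIr _)).
by rewrite mcoeffU -xpair_eqE mulr_natr.
Qed.

Lemma Lmul_X_inj : injective (Lmul (mon K 1 0)).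
Proof. by move=> Q1 Q2 h; apply/malgP => u; rewrite -mcoeff_Lmul_X h mcoeff_Lmul_X. Qed.

Lemma WmulE (P Q : A) : Wmul l P Q = msum (fun u => msum (Wmonmul K l u) Q) P.
Proof.
rewrite /Wmul /msum; apply: eq_bigr => u _; rewrite scaler_sumr.
by apply: eq_bigr => v _; rewrite scalerA.
Qed.

Lemma WmulBl (P1 P2 Q : A) : Wmul l (P1 - P2) Q = Wmul l P1 Q - Wmul l P2 Q.
Proof. by rewrite !WmulE msumB. Qed.

Lemma WmulBr (P Q1 Q2 : A) : Wmul l P (Q1 - Q2) = Wmul l P Q1 - Wmul l P Q2.
Proof. by rewrite !WmulE msum_sub; apply: eq_bigr => u _; rewrite msumB. Qed.

Lemma supported_Wmul (Q : pred I) (P1 P2 : A) :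
  (forall u v (k : nat), u \in msupp P1 -> v \in msupp P2 -> (k <= u.2)%N ->
      Q (u.1 + v.1 - (k * l)%:Z, (u.2 + v.2 - k)%N)) ->
  supported Q (Wmul l P1 P2).
Proof.
move=> h; rewrite /Wmul big_seq; apply: supported_sum => u hu.
rewrite big_seq; apply: supported_sum => v hv; apply: supportedZ.
apply: supported_sum => k _; apply/supportedZ/supported_mon.
by apply: h => //; rewrite -ltnS.
Qed.

Lemma supported_Lmul (Q : pred I) (P1 P2 : A) :
  (forall u v, u \in msupp P1 -> v \in msupp P2 -> Q (u.1 + v.1, (u.2 + v.2)%N)) ->
  supported Q (Lmul P1 P2).
Proof.
move=> h; rewrite /Lmul big_seq; apply: supported_sum => u hu.
by rewrite big_seq; apply: supported_sum => v hv; apply/supportedZ/supported_mon/h.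
Qed.

Lemma supported_Wmul_sub_Lmul (Q : pred I) (P1 P2 : A) :
  (forall u v (k : nat), u \in msupp P1 -> v \in msupp P2 -> (0 < k <= u.2)%N ->
      Q (u.1 + v.1 - (k * l)%:Z, (u.2 + v.2 - k)%N)) ->
  supported Q (Wmul l P1 P2 - Lmul P1 P2).
Proof.
move=> h; rewrite /Wmul /Lmul -sumrB big_seq; apply: supported_sum => u hu.
rewrite -sumrB big_seq; apply: supported_sum => v hv; rewrite -scalerBr.
apply: supportedZ; rewrite WmonmulE addrAC subrr add0r.
apply: supported_sum => k _; apply/supportedZ/supported_mon.
by apply: h => //=; exact: ltn_ord.
Qed.

End Products.

Lemma foldr_max_ge (x0 x : rat) (t : seq rat) : x \in t -> x <= foldr Num.max x0 t.
Proof.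
elim: t => //= a t IH; rewrite inE le_max => /orP[/eqP ->|/IH ->].
  by rewrite lexx.
by rewrite orbT.
Qed.

Lemma foldr_max_mem (x0 : rat) (t : seq rat) :
  foldr Num.max x0 t = x0 \/ foldr Num.max x0 t \in t.
Proof.
elim: t => [|a t IH] /=; first by left.
rewrite maxEle; case: ifP => _; last by right; rewrite mem_head.
by case: IH => [->|h]; [left | right; rewrite inE h orbT].
Qed.

Section Weight.
Variables (l : nat) (r s : int).
Local Notation w := (weight l r s).

Definition wt_le c : pred I := fun u => w u <= c.
Definition wt_lt c : pred I := fun u => w u < c.
Definition wt_eq c : pred I := fun u => w u == c.

Lemma wt_lt_le c : subpred (wt_lt c) (wt_le c).
Proof. by move=> u /ltW. Qed.

Lemma wt_eq_le c : subpred (wt_eq c) (wt_le c).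
Proof. by move=> u /eqP; rewrite /wt_le => ->. Qed.

Lemma weightD a b c d : w (a + c, (b + d)%N) = w (a, b) + w (c, d).
Proof. by rewrite /weight /= intrD natrD mulrDl; ring. Qed.

Lemma weightS i j : w (i, j.+1) = w (i, j) + s%:~R.
Proof. by rewrite /weight /= -addn1 natrD; ring. Qed.

Lemma weight_Y : w (0, 1%N) = s%:~R.
Proof. by rewrite /weight /= mul0r mulr0 add0r mulr1. Qed.

(* The weight of the k-th term of [Wmonmul K l u v]. *)
Lemma weight_commute (u v : I) (k : nat) : (0 < l)%N -> (k <= u.2 + v.2)%N ->
  w (u.1 + v.1 - (k * l)%:Z, (u.2 + v.2 - k)%N) = w u + w v - k%:R * (r + s)%:~R.
Proof.
move=> hl hk; rewrite /weight /= intrB intrD -pmulrn natrB // natrD natrM intrD.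
have l0 : (l%:R : rat) != 0 by rewrite pnatr_eq0 -lt0n.
by field.
Qed.

Variable K : fieldType.
Local Notation A := (Wpoly K).
Local Notation v := (vdeg l r s).
Local Notation lead := (lead l r s).

Lemma supported_mon_weight i j : supported (wt_eq (w (i, j))) (mon K i j).
Proof. by move=> u; rewrite msupp_mon inE => /eqP ->; rewrite /wt_eq. Qed.

Lemma vdeg_ge (P : A) u : u \in msupp P -> w u <= v P.
Proof. by move=> hu; apply: foldr_max_ge; apply/mapP; exists u. Qed.

Lemma vdeg_mem (P : A) : P != 0 -> exists2 u, u \in msupp P & w u = v P.
Proof.
move=> /msupp_neq0[b hb]; rewrite /vdeg.
have hin u : (u \in msupp P) = (u \in enum_fset (msupp P)) by [].
case E: (enum_fset (msupp P)) => [|a t]; first by rewrite hin E in hb.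
have ha : a \in msupp P by rewrite hin E mem_head.
case: (foldr_max_mem (w (head (0%:Z, 0%N) (a :: t))) [seq w u | u <- a :: t]).
  by move=> ->; exists a.
by case/mapP => u hu ->; exists u => //; rewrite hin E.
Qed.

Lemma mcoeff_lead (P : A) x : (lead P)@_x = if w x == v P then P@_x else 0.
Proof.
rewrite /Defs.lead big_mkcond raddf_sum /=.
transitivity (\sum_(u <- msupp P) (if w u == v P then P@_u else 0) *+ (u == x)).
  by apply: eq_bigr => u _; case: ifP; rewrite ?mcoeffU ?mcoeff0 ?mul0rn.
case: (boolP (x \in msupp P)) => hx.
  rewrite (big_fsetD1 x hx) /= eqxx mulr1n big1_fset ?addr0 // => u.
  by rewrite in_fsetD1 => /andP[/negbTE ->].
rewrite (mcoeff_outdom hx) if_same big1_fset // => u hu _.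
by case: (eqVneq u x) => [ux|_]; [rewrite -ux hu in hx | rewrite mulr0n].
Qed.

Lemma lead_supported (P : A) : supported (wt_eq (v P)) (lead P).
Proof. by move=> x; rewrite -mcoeff_neq0 mcoeff_lead; case: ifP => //; rewrite eqxx. Qed.

Lemma sub_lead_supported (P : A) : supported (wt_lt (v P)) (P - lead P).
Proof.
move=> x; rewrite -mcoeff_neq0 mcoeffB mcoeff_lead; case: ifP => [_|hx].
  by rewrite subrr eqxx.
by rewrite subr0 mcoeff_neq0 => /vdeg_ge; rewrite /wt_lt lt_neqAle hx.
Qed.

Lemma lead_neq0 (P : A) : P != 0 -> lead P != 0.
Proof.
move=> /vdeg_mem [u hu wu]; apply/eqP => h.
move: hu; rewrite -mcoeff_neq0 => /eqP; apply.
by have := mcoeff_lead P u; rewrite h mcoeff0 wu eqxx.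
Qed.

Lemma leadP (P H : A) c : H != 0 -> supported (wt_eq c) H ->
  supported (wt_lt c) (P - H) -> v P = c /\ lead P = H.
Proof.
move=> nH hH hPH.
have cP x : w x == c -> P@_x = H@_x.
  move=> hx; apply/eqP; rewrite -subr_eq0 -mcoeffB; apply/eqP/mcoeff_outdom.
  by apply/negP => /hPH; rewrite /wt_lt (eqP hx) ltxx.
have cH x : w x != c -> H@_x = 0.
  by move=> hx; apply: mcoeff_outdom; apply/negP => /hH; rewrite /wt_eq (negbTE hx).
have bP x : x \in msupp P -> w x <= c.
  move=> hx; case: (eqVneq (w x) c) => [->//|ne].
  by apply/ltW/hPH; rewrite -mcoeff_neq0 mcoeffB (cH _ ne) subr0 mcoeff_neq0.
have [x hx] := msupp_neq0 nH.
have wx : w x == c := hH x hx.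
have xP : x \in msupp P by rewrite -mcoeff_neq0 (cP _ wx) mcoeff_neq0.
have nP : P != 0 by apply: contraTneq xP => ->; rewrite msupp0 inE.
have vd : v P = c.
  apply/le_anti/andP; split; first by have [u hu <-] := vdeg_mem nP; apply: bP.
  by rewrite -(eqP wx) vdeg_ge.
split => //; apply/malgP => y; rewrite mcoeff_lead vd.
by case: ifP => [/cP //| /negbT /cH ->].
Qed.

End Weight.

Section Filtration.
Variables (l : nat) (r s : int) (K : fieldType).
Hypotheses (l_gt0 : (0 < l)%N) (rs_gt0 : 0 < r + s).
Local Notation A := (Wpoly K).
Local Notation w := (weight l r s).
Local Notation wt_le := (wt_le l r s).
Local Notation wt_lt := (wt_lt l r s).
Local Notation wt_eq := (wt_eq l r s).

Lemma weight_commute_le (u v : I) (k : nat) : (k <= u.2)%N ->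
  w (u.1 + v.1 - (k * l)%:Z, (u.2 + v.2 - k)%N) <= w u + w v.
Proof.
move=> hk; rewrite weight_commute ?(leq_trans hk) ?leq_addr // gerBl.
by rewrite mulr_ge0 // ler0z ltW.
Qed.

Lemma weight_commute_lt (u v : I) (k : nat) : (0 < k <= u.2)%N ->
  w (u.1 + v.1 - (k * l)%:Z, (u.2 + v.2 - k)%N) < w u + w v.
Proof.
case/andP=> k_gt0 hk; rewrite weight_commute ?(leq_trans hk) ?leq_addr //.
by rewrite gtrBl mulr_gt0 // ?ltr0n // ltr0z.
Qed.

Lemma supported_Wmul_ltl c d (P Q : A) : supported (wt_lt c) P ->
  supported (wt_le d) Q -> supported (wt_lt (c + d)) (Wmul l P Q).
Proof.
move=> hP hQ; apply: supported_Wmul => u v k hu hv hk.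
exact: le_lt_trans (weight_commute_le v hk) (ltr_leD (hP u hu) (hQ v hv)).
Qed.

Lemma supported_Wmul_ltr c d (P Q : A) : supported (wt_le c) P ->
  supported (wt_lt d) Q -> supported (wt_lt (c + d)) (Wmul l P Q).
Proof.
move=> hP hQ; apply: supported_Wmul => u v k hu hv hk.
exact: le_lt_trans (weight_commute_le v hk) (ler_ltD (hP u hu) (hQ v hv)).
Qed.

Lemma supported_Wmul_sub_Lmul_lt c d (P Q : A) : supported (wt_le c) P ->
  supported (wt_le d) Q -> supported (wt_lt (c + d)) (Wmul l P Q - Lmul P Q).
Proof.
move=> hP hQ; apply: supported_Wmul_sub_Lmul => u v k hu hv hk.
exact: lt_le_trans (weight_commute_lt v hk) (lerD (hP u hu) (hQ v hv)).
Qed.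

Lemma supported_Lmul_eq c d (P Q : A) : supported (wt_eq c) P ->
  supported (wt_eq d) Q -> supported (wt_eq (c + d)) (Lmul P Q).
Proof.
move=> hP hQ; apply: supported_Lmul => -[a b] [a' b'] hu hv.
by rewrite /wt_eq weightD (eqP (hP _ hu)) (eqP (hQ _ hv)).
Qed.

End Filtration.

Lemma fixes_Xpow (K : fieldType) (f : Wpoly K -> Wpoly K) :
  f (mon K 0 0) = mon K 0 0 ->
  (forall Q, f (Lmul (mon K 1 0) Q) = Lmul (mon K 1 0) (f Q)) ->
  forall i, f (mon K i 0) = mon K i 0.
Proof.
move=> f1 fX; have XmonE i : Lmul (mon K 1 0) (mon K i 0) = mon K (1 + i) 0.
  by rewrite Lmul_mon.
have fpos (n : nat) : f (mon K n 0) = mon K n 0.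
  by elim: n => // n IH; rewrite -add1n PoszD -XmonE fX IH.
have fneg (n : nat) : f (mon K (- n%:Z) 0) = mon K (- n%:Z) 0.
  elim: n => [|n IH]; first by rewrite oppr0.
  apply: Lmul_X_inj; rewrite -fX !XmonE.
  by rewrite -add1n PoszD opprD addrA subrr add0r.
by case=> n; rewrite ?NegzE.
Qed.

Section Endomorphisms.
Variables (l : nat) (r s : int) (K : fieldType).
Hypotheses (l_gt0 : (0 < l)%N) (rs_gt0 : 0 < r + s).
Local Notation A := (Wpoly K).
Local Notation w := (weight l r s).
Local Notation wt_le := (wt_le l r s).
Local Notation wt_lt := (wt_lt l r s).
Local Notation wt_eq := (wt_eq l r s).

Variables (phi psi : A -> A).
Hypotheses (phi_mul : forall P Q, phi (Wmul l P Q) = Wmul l (phi P) (phi Q))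
  (phi1 : phi (mon K 0 0) = mon K 0 0) (phiX : phi (mon K 1 0) = mon K 1 0).
Hypotheses (psi_mul : forall P Q, psi (Lmul P Q) = Lmul (psi P) (psi Q))
  (psi1 : psi (mon K 0 0) = mon K 0 0) (psiX : psi (mon K 1 0) = mon K 1 0).

Lemma phi_Xpow i : phi (mon K i 0) = mon K i 0.
Proof. by apply: fixes_Xpow => // Q; rewrite -(Wmul_X l) phi_mul phiX Wmul_X. Qed.

Lemma psi_Xpow i : psi (mon K i 0) = mon K i 0.
Proof. by apply: fixes_Xpow => // Q; rewrite psi_mul psiX. Qed.

Lemma phi_monS i j : phi (mon K i j.+1) = Wmul l (phi (mon K i j)) (phi (mon K 0 1)).
Proof. by rewrite -phi_mul Wmul_mon Wmonmul_Y. Qed.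

Lemma psi_monS i j : psi (mon K i j.+1) = Lmul (psi (mon K i j)) (psi (mon K 0 1)).
Proof. by rewrite -psi_mul Lmul_mon addr0 addn1. Qed.

Lemma psi_mon_eq : supported (wt_eq s%:~R) (psi (mon K 0 1)) ->
  forall i j, supported (wt_eq (w (i, j))) (psi (mon K i j)).
Proof.
move=> hY i; elim=> [|j IH]; first by rewrite psi_Xpow; apply: supported_mon_weight.
by rewrite psi_monS weightS; apply: supported_Lmul_eq.
Qed.

(* phi and psi agree on Y, so they differ only by the commutation terms of
   the Weyl product, which are of lower weight. *)
Lemma phi_sub_psi_mon_lt : phi (mon K 0 1) = psi (mon K 0 1) ->
  supported (wt_eq s%:~R) (psi (mon K 0 1)) ->
  forall i j, supported (wt_lt (w (i, j))) (phi (mon K i j) - psi (mon K i j)).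
Proof.
move=> eY hY i; elim=> [|j IH].
  by rewrite phi_Xpow psi_Xpow subrr; apply: supported0.
have psi_le : supported (wt_le (w (i, j))) (psi (mon K i j)).
  exact: sub_supported (@wt_eq_le _ _ _ _) (@psi_mon_eq hY i j).
have Y_le : supported (wt_le s%:~R) (psi (mon K 0 1)).
  exact: sub_supported (@wt_eq_le _ _ _ _) hY.
set Y := psi (mon K 0 1); rewrite phi_monS psi_monS weightS eY.
have -> : Wmul l (phi (mon K i j)) Y - Lmul (psi (mon K i j)) Y =
    Wmul l (phi (mon K i j) - psi (mon K i j)) Y +
    (Wmul l (psi (mon K i j)) Y - Lmul (psi (mon K i j)) Y).
  by rewrite WmulBl addrA subrK.
by apply: supportedD; [apply: supported_Wmul_ltl | apply: supported_Wmul_sub_Lmul_lt].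
Qed.

Lemma phi_mon_sub_lt : supported (wt_lt s%:~R) (phi (mon K 0 1) - mon K 0 1) ->
  forall i j, supported (wt_lt (w (i, j))) (phi (mon K i j) - mon K i j).
Proof.
move=> hY i; elim=> [|j IH]; first by rewrite phi_Xpow subrr; apply: supported0.
have Y_le : supported (wt_le s%:~R) (phi (mon K 0 1)).
  rewrite -(subrK (mon K 0 1) (phi _)); apply: supportedD.
    exact: sub_supported (@wt_lt_le _ _ _ _) hY.
  by apply: supported_mon; rewrite -(weight_Y l r); exact: lexx.
set Y := phi (mon K 0 1); rewrite phi_monS weightS -[mon K i j.+1](Wmonmul_Y K l) -Wmul_mon.
have -> : Wmul l (phi (mon K i j)) Y - Wmul l (mon K i j) (mon K 0 1) =
    Wmul l (phi (mon K i j) - mon K i j) Y + Wmul l (mon K i j) (Y - mon K 0 1).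
  by rewrite WmulBl WmulBr addrA subrK.
apply: supportedD; first exact: supported_Wmul_ltl.
by apply: supported_Wmul_ltr => //; apply: supported_mon; exact: lexx.
Qed.

End Endomorphisms.

Lemma lead_perturb (l : nat) (r s : int) (K : fieldType) (f g : Wpoly K -> Wpoly K) :
  linear f -> linear g -> injective g ->
  (forall i j, supported (wt_eq l r s (weight l r s (i, j))) (g (mon K i j))) ->
  (forall i j, supported (wt_lt l r s (weight l r s (i, j)))
                         (f (mon K i j) - g (mon K i j))) ->
  forall P, P != 0 -> vdeg l r s (f P) = vdeg l r s P /\ lead l r s (f P) = g (lead l r s P).
Proof.
move=> flin glin ginj hg hfg P P0; set H := lead l r s P.
have f_le i j : supported (wt_le l r s (weight l r s (i, j))) (f (mon K i j)).
  rewrite -[f _](subrK (g (mon K i j))); apply: supportedD.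
    exact: sub_supported (@wt_lt_le _ _ _ _) (hfg i j).
  exact: sub_supported (@wt_eq_le _ _ _ _) (hg i j).
apply: leadP.
- apply: contraNneq (lead_neq0 l r s P0) => gH0.
  by apply/eqP/ginj; rewrite gH0 (linear_fun0 glin).
- by apply: (supported_linear glin) => u /lead_supported/eqP <-; apply: hg.
have -> : f P - g H = f (P - H) + (f H - g H).
  by rewrite (zmod_morphism_linear flin) addrA subrK.
apply: supportedD.
  apply: (supported_linear flin) => u /sub_lead_supported hu.
  by apply: sub_supported (f_le u.1 u.2) => x hx; apply: le_lt_trans hx hu.
apply: (supported_linear (linearB_fun flin glin)) => u /lead_supported/eqP <-.
exact: hfg.
Qed.

(* Distinct elements of frak V are not proportional. *)
Lemma ltV_cross_gt0 (r s r1 s1 : int) : r != 0 -> inV r s -> inV r1 s1 ->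
  ltV r s r1 s1 -> 0 < r * s1 - s * r1.
Proof.
move=> r0 /andP[g hrs] /andP[g1 hrs1] /andP[hle hne].
rewrite lt_neqAle (hle : 0 <= _) andbT; apply: contraNneq hne => h0.
have e : r * s1 = s * r1 by apply/eqP; rewrite -subr_eq0 -h0.
have /dvdzP[t ht] : (r %| r1)%Z.
  by rewrite -(Gauss_dvdzr _ g) -e dvdz_mulr.
have hs1 : s1 = t * s by apply: (mulfI r0); rewrite e ht; ring.
have t_gt0 : 0 < t by move: hrs1; rewrite ht hs1 -mulrDr pmulr_lgt0.
have t1 : t = 1.
  move: g1; rewrite ht hs1 [t * r]mulrC [t * s]mulrC -mulz_gcdl (eqP g) mul1r.
  by rewrite gtz0_abs // => /eqP.
by rewrite ht hs1 t1 !mul1r.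
Qed.

Lemma weight_Xdiv (l : nat) (r s rho sigma : int) : (0 < l)%N -> (rho %| l%:Z)%Z ->
  rho != 0 -> weight l r s (sigma * (l%:Z %/ rho)%Z, 0%N) = r%:~R * sigma%:~R / rho%:~R.
Proof.
move=> l_gt0 /divzK hq rho0; rewrite /weight /= mulr0 addr0 intrM.
have -> : l%:R = (l%:Z %/ rho)%Z%:~R * rho%:~R :> rat by rewrite -intrM hq.
have rho0' : rho%:~R != 0 :> rat by rewrite intr_eq0.
have q0 : (l%:Z %/ rho)%Z%:~R != 0 :> rat.
  rewrite intr_eq0; apply: contraTneq l_gt0 => q0.
  by move: hq; rewrite q0 mul0r => /eqP; rewrite eq_sym => /eqP [->].
by field; rewrite q0 rho0'.
Qed.

Unset Implicit Arguments.
Theorem proposition4p2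
  (K : fieldType) (charK0 : [pchar K] =i pred0)
  (l : nat) (l_gt0 : (0 < l)%N)
  (rho sigma : int) (hV : inV rho sigma) (hsigma : sigma <= 0)
  (hdvd : (rho %| l%:Z)%Z) (lambda : K)
  (phi : Wpoly K -> Wpoly K)
  (phi_lin : forall (c : K) (P Q : Wpoly K), phi (c *: P + Q) = c *: phi P + phi Q)
  (phi_mul : forall P Q : Wpoly K, phi (Wmul l P Q) = Wmul l (phi P) (phi Q))
  (phi_one : phi (mon K 0 0) = mon K 0 0)
  (phi_bij : bijective phi)
  (phi_X : phi (mon K 1 0) = mon K 1 0)
  (phi_Y : phi (mon K 0 1) = mon K 0 1 + lambda *: mon K (sigma * (l%:Z %/ rho)%Z) 0)
  (phiL : Wpoly K -> Wpoly K)
  (phiL_lin : forall (c : K) (P Q : Wpoly K), phiL (c *: P + Q) = c *: phiL P + phiL Q)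
  (phiL_mul : forall P Q : Wpoly K, phiL (Lmul P Q) = Lmul (phiL P) (phiL Q))
  (phiL_one : phiL (mon K 0 0) = mon K 0 0)
  (phiL_bij : bijective phiL)
  (phiL_X : phiL (mon K 1 0) = mon K 1 0)
  (phiL_Y : phiL (mon K 0 1) = mon K 0 1 + lambda *: mon K (sigma * (l%:Z %/ rho)%Z) 0)
  (P : Wpoly K) (hP : P != 0) :
  [/\ lead l rho sigma (phi P) = phiL (lead l rho sigma P),
      vdeg l rho sigma (phi P) = vdeg l rho sigma P
    & forall rho1 sigma1 : int, inV rho1 sigma1 -> ltV rho sigma rho1 sigma1 ->
        lead l rho1 sigma1 (phi P) = lead l rho1 sigma1 P].
Proof.
have [_ hrs] := andP hV.
have rho_gt0 : 0 < rho by apply: lt_le_trans hrs _; rewrite gerDl.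
have rho0 : rho != 0 := lt0r_neq0 rho_gt0.
have wX r s := weight_Xdiv r s sigma l_gt0 hdvd rho0.
have hY : supported (wt_eq l rho sigma sigma%:~R) (phiL (mon K 0 1)).
  rewrite phiL_Y; apply: supportedD; first by apply: supported_mon; rewrite /wt_eq weight_Y.
  by apply/supportedZ/supported_mon; rewrite /wt_eq wX mulrAC divff ?mul1r ?intr_eq0.
have eY : phi (mon K 0 1) = phiL (mon K 0 1) by rewrite phi_Y phiL_Y.
have [vdeg_phi lead_phi] := lead_perturb phi_lin phiL_lin (bij_inj phiL_bij)
  (psi_mon_eq phiL_mul phiL_one phiL_X hY)
  (phi_sub_psi_mon_lt l_gt0 hrs phi_mul phi_one phi_X phiL_mul phiL_one phiL_X eY hY) hP.
split=> // rho1 sigma1 hV1 hlt.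
have [_ hrs1] := andP hV1.
have hY1 : supported (wt_lt l rho1 sigma1 sigma1%:~R) (phi (mon K 0 1) - mon K 0 1).
  rewrite phi_Y addrAC subrr add0r; apply/supportedZ/supported_mon.
  rewrite /wt_lt wX ltr_pdivrMr ?ltr0z // -!intrM ltr_int -subr_gt0.
  by rewrite [sigma1 * _]mulrC [rho1 * _]mulrC ltV_cross_gt0.
by have [_ ->] := lead_perturb phi_lin (g := id) (fun _ _ _ => erefl) (@inj_id _)
  (@supported_mon_weight l rho1 sigma1 K)
  (phi_mon_sub_lt l_gt0 hrs1 phi_mul phi_one phi_X hY1) hP.
Qed.
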